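(* Define $L:\mathbf{MKF}_\infty\to\mathbf{KFR}$ by $L(\langle W,S\rangle)=\langle W,\bigcap S\rangle$ and $L(f)=f$, and $M:\mathbf{KFR}\to\mathbf{MKF}_\infty$ by $M(\langle W,R\rangle)=\langle W,\{R\}\rangle$ and $M(f)=f$. Then $L$ and $M$ are well-defined functors and $L\circ M\cong \mathrm{id}_{\mathbf{KFR}}$, $M\circ L\cong\mathrm{id}_{\mathbf{MKF}_\infty}$; hence $\mathbf{MKF}_\infty$ and $\mathbf{KFR}$ are equivalent.
   Context: A Kripke frame is a pair $\langle W,R\rangle$ with $W$ a non-empty set and $R\subseteq W\times W$. A homomorphism of Kripke frames $f:\langle W_1,R_1\rangle\to\langle W_2,R_2\rangle$ is a map $f:W_1\to W_2$ such that (a) $vR_1w$ implies $f(v)R_2f(w)$, and (b) if $f(w)R_2u$ then there is $v\in W_1$ with $wR_1v$ and $f(v)=u$. $\mathbf{KFR}$ is the category of Kripke frames and their homomorphisms. A multi-relational Kripke frame is a pair $\langle W,S\rangle$ where $W$ is a non-empty set and $S$ is a non-empty set of binary relations on $W$. It is completely downward directed if for every $S'\subseteq S$ there is $R\in S$ with $R\subseteq\bigcap S'$ (with $\bigcap\emptyset=W\times W$); equivalently $\bigcap S\in S$. A homomorphism of multi-relational Kripke frames $f:\langle W_1,S_1\rangle\to\langle W_2,S_2\rangle$ is a map $f:W_1\to W_2$ such that: (i) for every $x\in W_1$ and $R_2\in S_2$ there is $R_1\in S_1$ such that for all $y\in W_1$, $xR_1y$ implies $f(x)R_2f(y)$; (ii)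 for every $x\in W_1$ and $R_1\in S_1$ there is $R_2\in S_2$ such that for all $u\in W_2$, if $f(x)R_2u$ then there exists $y\in W_1$ with $xR_1y$ and $f(y)=u$. $\mathbf{MKF}_\infty$ is the category of completely downward directed multi-relational Kripke frames with these homomorphisms. *)

Set Implicit Arguments.

Definition rel (W : Type) := W -> W -> Prop.

Record KFrame := KF { kW : Type; kW_ne : inhabited kW; kR : rel kW }.

Record MFrame := MF { mW : Type; mW_ne : inhabited mW;
                      mS : rel mW -> Prop; mS_ne : exists R, mS R }.

(* Intersection of a set of relations (the empty intersection is W x W). *)
Definition bigcap (W : Type) (S : rel W -> Prop) : rel W :=
  fun x y => forall R, S R -> R x y.

Definition subrel (W : Type) (R Q : rel W) : Prop := forall x y, R x y -> Q x y.

(* Completely downward directed: every subset S' of S has a lower bound in S. *)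
Definition cdd (F : MFrame) : Prop :=
  forall S' : rel (mW F) -> Prop, (forall R, S' R -> mS F R) ->
    exists R, mS F R /\ subrel R (bigcap S').

Definition kHom (F G : KFrame) (f : kW F -> kW G) : Prop :=
  (forall v w, kR F v w -> kR G (f v) (f w)) /\
  (forall w u, kR G (f w) u -> exists v, kR F w v /\ f v = u).

Definition mHom (F G : MFrame) (f : mW F -> mW G) : Prop :=
  (forall x R2, mS G R2 -> exists R1, mS F R1 /\
      forall y, R1 x y -> R2 (f x) (f y)) /\
  (forall x R1, mS F R1 -> exists R2, mS G R2 /\
      forall u, R2 (f x) u -> exists y, R1 x y /\ f y = u).

Definition kIso (F G : KFrame) (f : kW F -> kW G) : Prop :=
  kHom F G f /\ exists g : kW G -> kW F, kHom G F g /\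
    (forall x, g (f x) = x) /\ (forall y, f (g y) = y).

Definition mIso (F G : MFrame) (f : mW F -> mW G) : Prop :=
  mHom F G f /\ exists g : mW G -> mW F, mHom G F g /\
    (forall x, g (f x) = x) /\ (forall y, f (g y) = y).

(* The functor L on objects: <W,S> |-> <W, /\ S>; on morphisms f |-> f. *)
Definition L_obj (F : MFrame) : KFrame := KF (mW_ne F) (bigcap (mS F)).

(* The functor M on objects: <W,R> |-> <W,{R}>; on morphisms f |-> f. *)
Definition M_obj (K : KFrame) : MFrame :=
  MF (kW_ne K) (fun Q => Q = kR K) (ex_intro (fun Q => Q = kR K) (kR K) eq_refl).


Set Implicit Arguments.

(* In a completely downward directed frame some member of S lies below the
   intersection of S, so S and the singleton of its intersection are mutually
   coinitial. The homomorphism conditions of MKF_inf see a set of relations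
   only up to mutual coinitiality, so the identity is an isomorphism between a
   frame and its image under M o L. Both composites are the identity on
   carriers, hence naturality is trivial. *)

Definition coinitial (W : Type) (S1 S2 : rel W -> Prop) : Prop :=
  forall R2, S2 R2 -> exists R1, S1 R1 /\ subrel R1 R2.

Lemma cdd_bigcap_lb (F : MFrame) :
  cdd F -> exists R0, mS F R0 /\ subrel R0 (bigcap (mS F)).
Proof. intros HF. apply (HF (mS F)). auto. Qed.

Lemma bigcap_subrel (W : Type) (S : rel W -> Prop) (R : rel W) :
  S R -> subrel (bigcap S) R.
Proof. intros HR x y Hxy. exact (Hxy R HR). Qed.

Lemma bigcap_singleton (W : Type) (R : rel W) (x y : W) :
  bigcap (fun Q => Q = R) x y <-> R x y.
Proof.
  split.
  - intros H. exact (H R eq_refl).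
  - intros H Q ->. exact H.
Qed.

Lemma L_hom (F G : MFrame) (f : mW F -> mW G) :
  cdd F -> mHom F G f -> kHom (L_obj F) (L_obj G) f.
Proof.
  intros HF [Hforth Hback].
  destruct (cdd_bigcap_lb HF) as [R0 [HR0 HR0lb]].
  split.
  - intros v w Hvw R2 HR2.
    destruct (Hforth v R2 HR2) as [R1 [HR1 Hmap]].
    exact (Hmap w (Hvw R1 HR1)).
  - intros w u Hu.
    destruct (Hback w R0 HR0) as [R2 [HR2 Hlift]].
    destruct (Hlift u (Hu R2 HR2)) as [y [Hy <-]].
    exists y. split; [exact (HR0lb w y Hy) | reflexivity].
Qed.

Lemma M_cdd (K : KFrame) : cdd (M_obj K).
Proof.
  intros S' HS'. exists (kR K). split; [reflexivity |].
  intros x y Hxy R HR. rewrite (HS' R HR). exact Hxy.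
Qed.

Lemma M_hom (K1 K2 : KFrame) (f : kW K1 -> kW K2) :
  kHom K1 K2 f -> mHom (M_obj K1) (M_obj K2) f.
Proof.
  intros [Hforth Hback]. split.
  - intros x R2 ->. exists (kR K1). split; [reflexivity |]. exact (Hforth x).
  - intros x R1 ->. exists (kR K2). split; [reflexivity |]. exact (Hback x).
Qed.

Lemma kIso_id_of_same_rel (K : KFrame) (n : inhabited (kW K)) (R : rel (kW K)) :
  (forall x y, R x y <-> kR K x y) -> kIso (KF n R) K (fun x => x).
Proof.
  intros HR.
  assert (Hid : forall Q1 Q2 : rel (kW K), (forall x y, Q1 x y -> Q2 x y) ->
            (forall x y, Q2 x y -> Q1 x y) -> kHom (KF n Q1) (KF n Q2) (fun x => x)).
  { intros Q1 Q2 H12 H21. split; [exact H12 |].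
    intros w u Hu. exists u. split; [exact (H21 w u Hu) | reflexivity]. }
  split.
  - apply (Hid R (kR K)); apply HR.
  - exists (fun x => x). split; [| split; reflexivity].
    apply (Hid (kR K) R); apply HR.
Qed.

Lemma mHom_id_of_coinitial (W : Type) (n1 n2 : inhabited W)
    (S1 S2 : rel W -> Prop) (e1 : exists R, S1 R) (e2 : exists R, S2 R) :
  coinitial S1 S2 -> coinitial S2 S1 ->
  mHom (MF n1 S1 e1) (MF n2 S2 e2) (fun x => x).
Proof.
  intros H12 H21. split.
  - intros x R2 HR2. destruct (H12 R2 HR2) as [R1 [HR1 Hsub]].
    exists R1. split; [exact HR1 | exact (Hsub x)].
  - intros x R1 HR1. destruct (H21 R1 HR1) as [R2 [HR2 Hsub]].
    exists R2. split; [exact HR2 |].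
    intros u Hu. exists u. split; [exact (Hsub x u Hu) | reflexivity].
Qed.

Lemma mIso_id_of_coinitial (F : MFrame) (S : rel (mW F) -> Prop)
    (e : exists R, S R) :
  coinitial S (mS F) -> coinitial (mS F) S -> mIso (MF (mW_ne F) S e) F (fun x => x).
Proof.
  destruct F as [W n SF eF]. intros H1 H2. split.
  - exact (mHom_id_of_coinitial n n e eF H1 H2).
  - exists (fun x => x). split; [| split; reflexivity].
    exact (mHom_id_of_coinitial n n eF e H2 H1).
Qed.

Lemma LM_iso (K : KFrame) : kIso (L_obj (M_obj K)) K (fun x => x).
Proof. apply kIso_id_of_same_rel. apply bigcap_singleton. Qed.

Lemma ML_iso (F : MFrame) : cdd F -> mIso (M_obj (L_obj F)) F (fun x => x).
Proof.
  intros HF. apply mIso_id_of_coinitial.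
  - intros R HR. exists (bigcap (mS F)). split; [reflexivity |].
    exact (@bigcap_subrel _ _ R HR).
  - intros Q ->. exact (cdd_bigcap_lb HF).
Qed.

Theorem mainTheorem2 :
  (forall (F G : MFrame), cdd F -> cdd G ->
     forall f : mW F -> mW G, mHom F G f -> kHom (L_obj F) (L_obj G) f) /\
  (forall K : KFrame, cdd (M_obj K)) /\
  (forall (K1 K2 : KFrame) (f : kW K1 -> kW K2),
     kHom K1 K2 f -> mHom (M_obj K1) (M_obj K2) f) /\
  (exists eta : forall K : KFrame, kW (L_obj (M_obj K)) -> kW K,
     (forall K, kIso (L_obj (M_obj K)) K (eta K)) /\
     (forall (K1 K2 : KFrame) (f : kW K1 -> kW K2), kHom K1 K2 f ->
        forall x, eta K2 (f x) = f (eta K1 x))) /\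
  (exists eps : forall F : MFrame, mW (M_obj (L_obj F)) -> mW F,
     (forall F, cdd F -> mIso (M_obj (L_obj F)) F (eps F)) /\
     (forall (F G : MFrame) (f : mW F -> mW G), cdd F -> cdd G -> mHom F G f ->
        forall x, eps G (f x) = f (eps F x))).
Proof.
  split; [| split; [| split; [| split]]].
  - intros F G HF _ f Hf. exact (L_hom HF Hf).
  - exact M_cdd.
  - exact M_hom.
  - exists (fun K x => x). split; [exact LM_iso | reflexivity].
  - exists (fun F x => x). split; [exact ML_iso | reflexivity].
Qed.
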